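(* Let $A$ be an infinitesimal Hopf algebra and let $L:A\to A$ be a linear map satisfying $\Delta(L(x))=L(x)\otimes 1+(\mathrm{Id}\otimes L)\circ\Delta(x)$ for all $x\in A$. Then there exists a unique morphism of infinitesimal Hopf algebras (i.e. unital algebra morphism that is also a counital coalgebra morphism) $\phi:\mathcal{H}\to A$ such that $\phi\circ B^+=L\circ\phi$.
   Context: An infinitesimal bialgebra over a field $K$ is an associative unital algebra $A$ with a coassociative counital coproduct $\Delta$ (counit $\varepsilon$) such that $\Delta(ab)=\Delta(a)(1\otimes b)+(a\otimes 1)\Delta(b)-a\otimes b$; it is an infinitesimal Hopf algebra if $\mathrm{Id}_A$ is invertible for the convolution product $f\star g=m\circ(f\otimes g)\circ\Delta$. Planar rooted trees have their children linearly ordered left to right; a planar forest is a finite, possibly empty, sequence of planar rooted trees ($1$ = empty forest); $\mathcal{H}$ is the free associative unital $K$-algebra on planar rooted trees, with basis the planar forests and product concatenation. $B^+(F)$ is the tree obtained by grafting the trees of the forest $F$ (in order) on a new common root. $\mathcal{H}$ carries the counit $\varepsilon(F)=\delta_{F,1}$ and the coproduct $\Delta$ defined as the unique linear map with $\Delta(1)=1\otimes1$, $\Delta(xy)=(x\otimes1)\Delta(y)+\Delta(x)(1\otimes y)-x\otimes y$ and $\Delta(B^+(x))=B^+(x)\otimes 1+(\mathrm{Id}\otimes B^+)\Delta(x)$; with these, $\mathcal{H}$ is an infinitesimal Hopf algebra. *)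

From HB Require Import structures.
From mathcomp Require Import all_boot all_order all_algebra.
From mathcomp Require Import finmap monalg.
Set Implicit Arguments.
Unset Strict Implicit.
Unset Printing Implicit Defensive.
Import GRing.Theory.
Local Open Scope ring_scope.

Inductive ptree : Type := Node of seq ptree.

Fixpoint ptree_enc (t : ptree) : GenTree.tree unit :=
  let: Node ts := t in GenTree.Node 0 (map ptree_enc ts).

Fixpoint ptree_dec (g : GenTree.tree unit) : ptree :=
  match g with
  | GenTree.Leaf _ => Node [::]
  | GenTree.Node _ gs => Node (map ptree_dec gs)
  end.

Fixpoint ptree_encK (t : ptree) : ptree_dec (ptree_enc t) = t :=
  match t return ptree_dec (ptree_enc t) = t with
  | Node ts => f_equal Node
      ((fix aux (s : seq ptree) : map ptree_dec (map ptree_enc s) = s :=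
          match s return map ptree_dec (map ptree_enc s) = s with
          | [::] => erefl
          | t :: s => f_equal2 cons (ptree_encK t) (aux s)
          end) ts)
  end.

HB.instance Definition _ := Countable.copy ptree (can_type ptree_encK).

(* H : free associative unital K-algebra on planar rooted trees; its
   basis is the planar forests {fmonom ptree} (= seq ptree, product =
   concatenation, unit = empty forest).                                *)
Definition Hf (K : fieldType) := {malg K[{fmonom ptree}]}.

Definition forest (K : fieldType) (F : seq ptree) : Hf K := << FMonom F >>.

Definition lin_ext (K : fieldType) (V : lmodType K)
  (f : seq ptree -> V) (x : Hf K) : V :=
  \sum_(k <- msupp x) x@_k *: f (fmonom_val k).

Definition Bplus (K : fieldType) (x : Hf K) : Hf K :=
  lin_ext (fun F => forest K [:: Node F]) x.

Definition epsH (K : fieldType) (x : Hf K) : K := x@_(FMonom [::]).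

(* Tensors: an element of V (x) W is represented by a finite formal sum
   sum_i v_i (x) w_i, i.e. a list of pairs.  Two such lists represent
   the same tensor iff they agree on every bilinear form V x W -> K
   (over a field, linear forms on V (x) W separate points).            *)
Definition tensor (V W : Type) := seq (V * W).

Definition bilinear_form (K : fieldType) (V W : lmodType K)
  (b : V -> W -> K) : Prop :=
  (forall a x y z, b (a *: x + y) z = a * b x z + b y z) /\
  (forall a x y z, b z (a *: x + y) = a * b z x + b z y).

Definition trilinear_form (K : fieldType) (U V W : lmodType K)
  (b : U -> V -> W -> K) : Prop :=
  (forall a x y u v, b (a *: x + y) u v = a * b x u v + b y u v) /\
  (forall a x y u v, b u (a *: x + y) v = a * b u x v + b u y v) /\
  (forall a x y u v, b u v (a *: x + y) = a * b u v x + b u v y).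

Definition teq (K : fieldType) (V W : lmodType K) (t1 t2 : tensor V W) :=
  forall b : V -> W -> K, bilinear_form b ->
    \sum_(p <- t1) b p.1 p.2 = \sum_(p <- t2) b p.1 p.2.

Definition teq3 (K : fieldType) (U V W : lmodType K)
  (t1 t2 : seq (U * V * W)) :=
  forall b : U -> V -> W -> K, trilinear_form b ->
    \sum_(p <- t1) b p.1.1 p.1.2 p.2 = \sum_(p <- t2) b p.1.1 p.1.2 p.2.

Definition tmap (V W V' W' : Type) (f : V -> V') (g : W -> W')
  (t : tensor V W) : tensor V' W' := [seq (f p.1, g p.2) | p <- t].

(* The coproduct of H on basis forests, by the defining recursion
     Delta(1) = 1 (x) 1,
     Delta(T G) = (T (x) 1) Delta(G) + Delta(T) (1 (x) G) - T (x) G,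
     Delta(B^+(F)) = B^+(F) (x) 1 + (Id (x) B^+) Delta(F).             *)
Fixpoint DeltaT (K : fieldType) (t : ptree) : tensor (Hf K) (Hf K) :=
  let: Node F := t in
  (forest K [:: Node F], 1)
  :: tmap id (@Bplus K)
       ((fix DF (s : seq ptree) : tensor (Hf K) (Hf K) :=
           match s with
           | [::] => [:: (1, 1)]
           | T :: G =>
               [seq (forest K [:: T] * p.1, p.2) | p <- DF G]
               ++ [seq (p.1, p.2 * forest K G) | p <- DeltaT K T]
               ++ [:: (- forest K [:: T], forest K G)]
           end) F).

Fixpoint DeltaF (K : fieldType) (s : seq ptree) : tensor (Hf K) (Hf K) :=
  match s with
  | [::] => [:: (1, 1)]
  | T :: G =>
      [seq (forest K [:: T] * p.1, p.2) | p <- DeltaF K G]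
      ++ [seq (p.1, p.2 * forest K G) | p <- DeltaT K T]
      ++ [:: (- forest K [:: T], forest K G)]
  end.

Definition DeltaH (K : fieldType) (x : Hf K) : tensor (Hf K) (Hf K) :=
  flatten [seq [seq (x@_k *: p.1, p.2) | p <- DeltaF K (fmonom_val k)]
          | k <- msupp x].

Definition convol (K : fieldType) (A : algType K)
  (Delta : A -> tensor A A) (f g : A -> A) (x : A) : A :=
  \sum_(p <- Delta x) f p.1 * g p.2.

Record is_inf_hopf (K : fieldType) (A : algType K)
  (Delta : A -> tensor A A) (eps : A -> K) : Prop := {
  ih_Delta_lin : forall a x y,
    teq (Delta (a *: x + y)) ([seq (a *: p.1, p.2) | p <- Delta x] ++ Delta y);
  ih_eps_lin : forall a x y, eps (a *: x + y) = a * eps x + eps y;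
  ih_coassoc : forall x,
    teq3 [seq (q.1, q.2, p.2) | p <- Delta x, q <- Delta p.1]
         [seq (p.1, q.1, q.2) | p <- Delta x, q <- Delta p.2];
  ih_counitl : forall x, \sum_(p <- Delta x) eps p.1 *: p.2 = x;
  ih_counitr : forall x, \sum_(p <- Delta x) eps p.2 *: p.1 = x;
  ih_inf : forall x y,
    teq (Delta (x * y))
        ([seq (p.1, p.2 * y) | p <- Delta x]
         ++ [seq (x * p.1, p.2) | p <- Delta y] ++ [:: (- x, y)]);
  ih_hopf : exists S : {linear A -> A},
    forall x, convol Delta S id x = eps x *: 1 /\
              convol Delta id S x = eps x *: 1
}.

Definition inf_hopf_morph (K : fieldType) (A : algType K)
  (Delta : A -> tensor A A) (eps : A -> K) (phi : Hf K -> A) : Prop :=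
  [/\ phi 1 = 1,
      forall x y, phi (x * y) = phi x * phi y,
      forall x, eps (phi x) = epsH x
    & forall x, teq (Delta (phi x)) (tmap phi phi (DeltaH x))].

From HB Require Import structures.
From mathcomp Require Import all_boot all_order all_algebra.
From mathcomp Require Import finmap monalg ring.
Set Implicit Arguments.
Unset Strict Implicit.
Unset Printing Implicit Defensive.
Import GRing.Theory.
Local Open Scope ring_scope.

(* Multiplicativity and [phi \o B^+ = L \o phi] force [phi] on every planar
   forest, by recursion on trees; this gives existence and uniqueness of the
   algebra morphism.  For the coproduct, both [Delta \o phi] and
   [(phi (x) phi) \o Delta_H] satisfy the same recursion: the infinitesimal
   rule on products and the hypothesis on [L] on grafted trees, so they agree
   by structural induction (tensors being compared through bilinear forms).
   For the counit, applying [eps (x) eps] to the infinitesimal rule shows that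
   [eps] is multiplicative, and counitality shows that it kills the image of
   [L]; hence [eps \o phi] is the counit of H. *)

Section ForestInduction.
Variables (P : ptree -> Prop) (Q : seq ptree -> Prop).
Hypotheses (Q_nil : Q [::]) (Q_cons : forall t s, P t -> Q s -> Q (t :: s))
  (P_node : forall s, Q s -> P (Node s)).

Fixpoint ptree_mut_ind (t : ptree) : P t :=
  let: Node s := t in P_node
    ((fix forest_rec (s : seq ptree) : Q s :=
        if s is t :: s' then Q_cons (ptree_mut_ind t) (forest_rec s')
        else Q_nil) s).

Lemma forest_mut_ind s : Q s.
Proof. by elim: s => // t s IH; apply: Q_cons (ptree_mut_ind t) IH. Qed.

End ForestInduction.

Lemma addr_eq_self (V : zmodType) (a b : V) : a = a + b -> b = 0.
Proof. by move/esym/(canRL (addKr a)); rewrite addNr. Qed.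

Section Linearity.
Variable K : fieldType.

Definition islin (V W : lmodType K) (f : V -> W) :=
  forall a x y, f (a *: x + y) = a *: f x + f y.

Lemma islin0 (V W : lmodType K) (f : V -> W) : islin f -> f 0 = 0.
Proof.
move=> hf; apply: (@addr_eq_self _ (f 0)).
by rewrite -{1}(addr0 0) -{1}(scale1r 0) hf scale1r.
Qed.

Lemma islin_sum (I : Type) (V W : lmodType K) (f : V -> W) (r : seq I) c y :
  islin f -> f (\sum_(i <- r) c i *: y i) = \sum_(i <- r) c i *: f (y i).
Proof.
move=> hf; elim: r => [|i r IH]; first by rewrite !big_nil islin0.
by rewrite !big_cons hf IH.
Qed.

Lemma islin_linear (V W : lmodType K) (f : {linear V -> W}) : islin f.
Proof. by move=> a x y; rewrite linearP. Qed.

Lemma islin_id (V : lmodType K) : islin (@id V).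
Proof. by []. Qed.

Lemma islin_comp (U V W : lmodType K) (f : V -> W) (g : U -> V) :
  islin f -> islin g -> islin (f \o g).
Proof. by move=> hf hg a x y /=; rewrite hg hf. Qed.

Lemma islin_mulr (B : lalgType K) (y : B) : islin ( *%R^~ y).
Proof. by move=> a u v; rewrite mulrDl scalerAl. Qed.

Lemma islin_mull (B : algType K) (x : B) : islin ( *%R x).
Proof. by move=> a u v; rewrite mulrDr scalerAr. Qed.

Lemma bilinear_form_comp (U V U' V' : lmodType K) (b : U -> V -> K)
    (f : U' -> U) (g : V' -> V) :
  bilinear_form b -> islin f -> islin g -> bilinear_form (fun u v => b (f u) (g v)).
Proof. by move=> [bl br] hf hg; split=> a x y z /=; rewrite ?hf ?hg ?bl ?br. Qed.

Section BilinearForm.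
Variables (V W : lmodType K) (b : V -> W -> K).
Hypothesis hb : bilinear_form b.

Lemma bilinear_form0l w : b 0 w = 0.
Proof.
apply: (@addr_eq_self _ (b 0 w)).
by rewrite -{2}[b 0 w]mul1r -hb.1 scale1r addr0.
Qed.

Lemma bilinear_formZl c v w : b (c *: v) w = c * b v w.
Proof. by have := hb.1 c v 0 w; rewrite addr0 bilinear_form0l addr0. Qed.

Lemma bilinear_formNl v w : b (- v) w = - b v w.
Proof. by rewrite -scaleN1r bilinear_formZl mulN1r. Qed.

End BilinearForm.
End Linearity.

Section FreeAlgebra.
Variable K : fieldType.

Lemma forest_nil : forest K [::] = 1.
Proof. by rewrite /forest; congr << _ >>; apply: val_inj; rewrite /= fm1. Qed.

Lemma forest_cons T G : forest K (T :: G) = forest K [:: T] * forest K G.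
Proof.
rewrite /forest malgM_def fgmulUU mulr1; congr << _ >>.
by apply: val_inj; rewrite /= fmM.
Qed.

Lemma Bplus_forest F : Bplus (forest K F) = forest K [:: Node F].
Proof. by rewrite /Bplus /lin_ext /forest msuppU1 big_seq_fset1 mcoeffUU scale1r. Qed.

Lemma epsH_forest F : epsH (forest K F) = (F == [::])%:R.
Proof. by rewrite /epsH /forest mcoeffU. Qed.

Lemma islin_epsH : islin (@epsH K : Hf K -> K^o).
Proof. by move=> a x y; rewrite /epsH mcoeffD mcoeffZ. Qed.

Lemma DeltaT_node F :
  DeltaT K (Node F) = (forest K [:: Node F], 1) :: tmap id (@Bplus K) (DeltaF K F).
Proof. by rewrite /=; congr (_ :: tmap _ _ _); elim: F => //= t F ->. Qed.

Lemma Hf_expand (x : Hf K) :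
  x = \sum_(k <- msupp x) x@_k *: forest K (fmonom_val k).
Proof.
rewrite {1}(monalgE x); apply: eq_bigr => k _.
by apply/malgP => k'; rewrite mcoeffZ /forest fmK !mcoeffU mulrnAr mulr1.
Qed.

Lemma Hf_lin_eq (V : lmodType K) (f g : Hf K -> V) :
  islin f -> islin g -> (forall F, f (forest K F) = g (forest K F)) -> f =1 g.
Proof.
move=> hf hg fg x; rewrite (Hf_expand x) !islin_sum //.
by apply: eq_bigr => k _; rewrite fg.
Qed.

End FreeAlgebra.

Section InfinitesimalHopf.
Variables (K : fieldType) (A : algType K).
Variables (Delta : A -> tensor A A) (eps : A -> K).
Hypothesis hA : is_inf_hopf Delta eps.

Lemma Delta_sum (I : Type) (r : seq I) c y (b : A -> A -> K) : bilinear_form b ->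
  \sum_(p <- Delta (\sum_(i <- r) c i *: y i)) b p.1 p.2
  = \sum_(i <- r) c i * \sum_(p <- Delta (y i)) b p.1 p.2.
Proof.
move=> hb; elim: r => [|i r IH].
  rewrite !big_nil; apply: (@addr_eq_self _ (\sum_(p <- Delta 0) b p.1 p.2)).
  rewrite -{1}(addr0 (0 : A)) -{1}(scale1r (0 : A)) (ih_Delta_lin hA _ _ _ hb).
  rewrite big_cat big_map /=.
  by under eq_bigr do rewrite scale1r.
rewrite !big_cons (ih_Delta_lin hA _ _ _ hb) big_cat big_map /= IH big_distrr.
by congr (_ + _); apply: eq_bigr => p _; rewrite bilinear_formZl.
Qed.

Lemma Delta1 (b : A -> A -> K) : bilinear_form b ->
  \sum_(p <- Delta 1) b p.1 p.2 = b 1 1.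
Proof.
move=> hb; have := ih_inf hA 1 1 hb.
rewrite !big_cat !big_map big_cons big_nil /= mulr1.
under [X in _ = X + _]eq_bigr do rewrite mulr1.
under [X in _ = _ + (X + _)]eq_bigr do rewrite mul1r.
by rewrite bilinear_formNl // addr0 => /addr_eq_self /eqP; rewrite subr_eq0 => /eqP.
Qed.

Lemma islin_eps : islin (eps : A -> K^o).
Proof. exact: ih_eps_lin hA. Qed.

Lemma epsN x : eps (- x) = - eps x.
Proof.
by rewrite -scaleN1r -[_ *: x]addr0 islin_eps (islin0 islin_eps) addr0 scaleN1r.
Qed.

Lemma bilinear_form_eps : bilinear_form (fun u v => eps u * eps v).
Proof. by split=> a x y z; rewrite (ih_eps_lin hA); ring. Qed.

Lemma counit_eps z : \sum_(p <- Delta z) eps p.1 * eps p.2 = eps z.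
Proof. by rewrite -[in RHS](ih_counitl hA z) (islin_sum _ _ _ islin_eps). Qed.

Lemma epsM x y : eps (x * y) = eps x * eps y.
Proof.
have := ih_inf hA x y bilinear_form_eps.
rewrite /= counit_eps !big_cat !big_map big_cons big_nil /=.
have -> : \sum_(p <- Delta x) eps p.1 * eps (p.2 * y) = eps (x * y).
  rewrite -[in RHS](ih_counitl hA x) mulr_suml.
  by under [in RHS]eq_bigr do rewrite -scalerAl; rewrite (islin_sum _ _ _ islin_eps).
have -> : \sum_(p <- Delta y) eps (x * p.1) * eps p.2 = eps (x * y).
  rewrite -[in RHS](ih_counitr hA y) mulr_sumr.
  under [in RHS]eq_bigr do rewrite -scalerAr; rewrite (islin_sum _ _ _ islin_eps).
  by apply: eq_bigr => p _; rewrite mulrC.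
by rewrite epsN mulNr addr0 => /addr_eq_self /eqP; rewrite subr_eq0 => /eqP.
Qed.

Lemma eps1 : eps 1 = 1.
Proof.
have e1 := epsM 1 1; rewrite mul1r in e1.
have [e0|e0] := eqVneq (eps 1) 0; last by apply: (mulfI e0); rewrite -e1 mulr1.
have := ih_counitl hA 1.
under eq_bigr => p _ do rewrite -[p.1]mulr1 epsM e0 mulr0 scale0r.
by rewrite big1 // => /esym/eqP; rewrite oner_eq0.
Qed.

Variable L : {linear A -> A}.
Hypothesis hL : forall x, teq (Delta (L x)) ((L x, 1) :: tmap id L (Delta x)).

Lemma epsL y : eps (L y) = 0.
Proof.
have := hL y bilinear_form_eps.
rewrite /= counit_eps big_cons big_map /= eps1 mulr1.
have -> : \sum_(p <- Delta y) eps p.1 * eps (L p.2) = eps (L y).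
  rewrite -[in RHS](ih_counitl hA y) (islin_sum _ _ _ (islin_linear L)).
  by rewrite (islin_sum _ _ _ islin_eps).
exact: addr_eq_self.
Qed.

Fixpoint phi_tree (t : ptree) : A :=
  let: Node F := t in
  L ((fix phi_trees (s : seq ptree) : A :=
        if s is t :: s' then phi_tree t * phi_trees s' else 1) F).

Definition phi_seq (s : seq ptree) : A := foldr (fun t a => phi_tree t * a) 1 s.

Lemma phi_tree_node F : phi_tree (Node F) = L (phi_seq F).
Proof. by rewrite /=; congr (L _); elim: F => //= t s ->. Qed.

Lemma phi_seq_cat s1 s2 : phi_seq (s1 ++ s2) = phi_seq s1 * phi_seq s2.
Proof. by elim: s1 => [|t s IH] /=; rewrite ?mul1r // IH mulrA. Qed.

Lemma eps_phi_seq F : eps (phi_seq F) = (F == [::])%:R.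
Proof.
case: F => [|[s] F]; first exact: eps1.
by rewrite epsM phi_tree_node epsL mul0r.
Qed.

Definition phi_fmonom (m : fmonom ptree) : A := phi_seq (fmonom_val m).

Lemma phi_fmonom_mmorphism : mmorphism phi_fmonom.
Proof.
by split=> [m1 m2|]; rewrite /phi_fmonom ?fmM ?phi_seq_cat // fm1.
Qed.
HB.instance Definition _ :=
  isMultiplicative.Build (fmonom ptree) A phi_fmonom phi_fmonom_mmorphism.

Definition phi (x : Hf K) : A := mmap (in_alg A) phi_fmonom x.

Lemma phi_is_additive : additive phi.
Proof. exact: mmap_is_additive. Qed.
HB.instance Definition _ := GRing.isAdditive.Build (Hf K) A phi phi_is_additive.

Lemma phi_is_scalable : scalable phi.
Proof. by move=> a x; rewrite /phi mmapZ /= mulr_algl. Qed.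
HB.instance Definition _ :=
  GRing.isScalable.Build K (Hf K) A *:%R phi phi_is_scalable.

Lemma phi1 : phi 1 = 1.
Proof. exact: mmap1. Qed.

Lemma phiM x y : phi (x * y) = phi x * phi y.
Proof.
have [phiM _] := @commr_mmap_is_multiplicative (fmonom ptree) K A (in_alg A)
  phi_fmonom (fun g m m' => comm_alg _ _).
exact: phiM.
Qed.

Lemma phi_forest F : phi (forest K F) = phi_seq F.
Proof. by rewrite /phi /forest mmapU /= mulr_algl scale1r. Qed.

Lemma islin_phi : islin phi.
Proof. exact: islin_linear. Qed.

Lemma phi_Bplus x : phi (Bplus x) = L (phi x).
Proof.
rewrite {2}(Hf_expand x) /Bplus /lin_ext !(islin_sum _ _ _ islin_phi).
rewrite (islin_sum _ _ _ (islin_linear L)); apply: eq_bigr => k _.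
by rewrite !phi_forest -phi_tree_node /= mulr1.
Qed.

Lemma Delta_phi_seq s : teq (Delta (phi_seq s)) (tmap phi phi (DeltaF K s)).
Proof.
apply: (@forest_mut_ind
  (fun t => teq (Delta (phi_tree t)) (tmap phi phi (DeltaT K t)))
  (fun s => teq (Delta (phi_seq s)) (tmap phi phi (DeltaF K s))))
  => [b hb|t {}s IHt IHs b hb|{}s IHs b hb]; rewrite /tmap big_map.
- by rewrite Delta1 // big_seq1 phi1.
- have -> : phi_seq (t :: s) = phi_tree t * phi_seq s by [].
  rewrite (ih_inf hA _ _ hb) /= !big_cat !big_map big_seq1 /=.
  have := IHt _ (bilinear_form_comp hb (@islin_id _ _) (islin_mulr (phi_seq s))).
  have := IHs _ (bilinear_form_comp hb (islin_mull (phi_tree t)) (@islin_id _ _)).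
  rewrite /tmap !big_map /= => -> ->; rewrite addrCA; congr (_ + (_ + _)).
  + by apply: eq_bigr => p _; rewrite phiM phi_forest /= mulr1.
  + by apply: eq_bigr => p _; rewrite phiM phi_forest.
  + by rewrite big_seq1 raddfN /= !phi_forest /= mulr1.
- rewrite DeltaT_node phi_tree_node (hL _ hb) !big_cons phi_forest phi1 /=.
  rewrite mulr1 -phi_tree_node; congr (_ + _).
  have := IHs _ (bilinear_form_comp hb (@islin_id _ _) (islin_linear L)).
  rewrite /tmap !big_map /= => ->.
  by apply: eq_bigr => p _; rewrite phi_Bplus.
Qed.

Lemma eps_phi x : eps (phi x) = epsH x.
Proof.
apply: (@Hf_lin_eq _ K^o (eps \o phi)) => [||F].
- exact: islin_comp islin_eps islin_phi.
- exact: islin_epsH.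
- by rewrite /= phi_forest eps_phi_seq epsH_forest.
Qed.

Lemma Delta_phi x : teq (Delta (phi x)) (tmap phi phi (DeltaH x)).
Proof.
move=> b hb; rewrite {1}(Hf_expand x) (islin_sum _ _ _ islin_phi) (Delta_sum _ _ _ hb).
rewrite /DeltaH /tmap big_map big_flatten big_map; apply: eq_bigr => k _.
rewrite phi_forest (Delta_phi_seq _ hb) /tmap !big_map big_distrr.
by apply: eq_bigr => p _; rewrite /= linearZ bilinear_formZl.
Qed.

Lemma phi_unique (psi : Hf K -> A) : islin psi -> psi 1 = 1 ->
  {morph psi : x y / x * y} -> (forall x, psi (Bplus x) = L (psi x)) ->
  psi =1 phi.
Proof.
move=> psi_lin psi1 psiM psiB; apply: (Hf_lin_eq psi_lin islin_phi) => F.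
rewrite phi_forest.
apply: (@forest_mut_ind (fun t => psi (forest K [:: t]) = phi_tree t)
                        (fun s => psi (forest K s) = phi_seq s)) => [|t s ht hs|s hs].
- by rewrite forest_nil psi1.
- by rewrite forest_cons psiM ht hs.
- by rewrite -Bplus_forest psiB hs phi_tree_node.
Qed.

End InfinitesimalHopf.

Theorem theorem16 (K : fieldType) (A : algType K)
  (Delta : A -> tensor A A) (eps : A -> K)
  (hA : is_inf_hopf Delta eps) (L : {linear A -> A})
  (hL : forall x : A,
     teq (Delta (L x)) ((L x, 1) :: tmap id L (Delta x))) :
  exists phi : {linear Hf K -> A},
    (inf_hopf_morph Delta eps phi /\ forall x, phi (Bplus x) = L (phi x)) /\
    forall psi : {linear Hf K -> A},
      inf_hopf_morph Delta eps psi /\ (forall x, psi (Bplus x) = L (psi x)) ->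
      forall x, psi x = phi x.
Proof.
exists (phi L : {linear _ -> _}); split; [split; [split|] |].
- exact: phi1.
- exact: phiM.
- by move=> x /=; rewrite (eps_phi hA hL).
- by move=> x /=; apply: (Delta_phi hA hL).
- exact: phi_Bplus.
- move=> psi [[psi1 psiM _ _] psiB].
  exact: phi_unique (islin_linear psi) psi1 psiM psiB.
Qed.
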